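(* Let $\mathcal{L}:\mathbb{R}^n\to\mathbb{R}$ be differentiable, let $(\eta^{(t)})_{t\ge 0}$ be positive learning rates and $(d^{(t)})_{t\ge0}$ nonnegative scalar thresholds. Let $\theta^{(t)}\in\mathbb{R}^n$ be hidden weights and $w^{(t)}=\mathcal{S}_{d^{(t)}}(\theta^{(t)})$ the actual weights, updated by $$\theta^{(t+1)}=\theta^{(t)}-\eta^{(t)}\,\nabla_w\mathcal{L}(w^{(t)})\odot\nabla_\theta w(\theta^{(t)},d^{(t)}),\qquad w^{(t+1)}=\mathcal{S}_{d^{(t+1)}}(\theta^{(t+1)}),$$ where the $i$-th component of $\nabla_\theta w(\theta^{(t)},d^{(t)})$ is the derivative of $\theta\mapsto \mathcal{S}_{d^{(t)}}(\theta)$ at $\theta_i^{(t)}$ whenever $|\theta_i^{(t)}|\neq d^{(t)}$ (so it equals $1$ when $|\theta_i^{(t)}|>d^{(t)}$). Let $i$ be an index with $w_i^{(t)}\neq 0$ such that $|\theta_i^{(t+1)}|>d^{(t)}$ and $\operatorname{sign}(\theta_i^{(t+1)})=\operatorname{sign}(\theta_i^{(t)})$. Then $$w_i^{(t+1)}=\mathcal{S}_{d^{(t+1)}-d^{(t)}}\Big(w_i^{(t)}-\eta^{(t)}\,\frac{\partial\mathcal{L}}{\partial w_i}(w^{(t)})\Big).$$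
   Context: $\odot$ is the element-wise product. The soft threshold mapping with scalar threshold $d$ is the element-wise map $\mathcal{S}_d(x)_i=\operatorname{sign}(x_i)\max\{|x_i|-d,0\}$ (applied to scalars likewise). *)

From HB Require Import structures.
From mathcomp Require Import all_boot all_order all_algebra.
From mathcomp Require Import all_classical all_reals all_analysis.
Set Implicit Arguments. Unset Strict Implicit. Unset Printing Implicit Defensive.
Import Order.TTheory GRing.Theory Num.Theory.
Import numFieldNormedType.Exports.
Local Open Scope ring_scope.

Definition soft {R : realType} (d : R) (x : R) : R :=
  Num.sg x * Num.max (`|x| - d) 0.

Definition softv {R : realType} {n : nat} (d : R) (x : 'rV[R]_n) : 'rV[R]_n :=
  map_mx (soft d) x.

Definition partial {R : realType} {n : nat} (L : 'rV[R]_n -> R) (i : 'I_n)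
  (w : 'rV[R]_n) : R :=
  'D_(delta_mx 0 i) L w.

(** An active weight ([w_i <> 0], i.e. [|theta_i| > d]) lies where the soft
threshold is locally the translation [x - sg(theta_i) d], so its derivative there
is [1] and the hidden step is plain gradient descent.  If the step keeps the sign
and stays above [d], the same translation gives [w_i - eta g = soft_d theta_i^(t+1)].
Thresholds compose additively above the first one, [soft_e (soft_d y) = soft_(d+e) y],
and [e := d' - d] finishes. *)

From HB Require Import structures.
From mathcomp Require Import all_boot all_order all_algebra.
From mathcomp Require Import all_classical all_reals all_analysis.
Set Implicit Arguments. Unset Strict Implicit. Unset Printing Implicit Defensive.
Import Order.TTheory GRing.Theory Num.Theory.
Import numFieldNormedType.Exports.
Local Open Scope ring_scope.

Section SoftThreshold.
Variable R : realType.
Implicit Types d e x y : R.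

Lemma soft_out d x : d < `|x| -> soft d x = x - Num.sg x * d.
Proof.
by move=> lt_dx; rewrite /soft max_l ?subr_ge0 ?ltW // mulrBr -numEsg.
Qed.

Lemma soft_neq0_lt d x : soft d x != 0 -> d < `|x|.
Proof.
by rewrite ltNge; apply: contra => le_xd; rewrite /soft max_r ?mulr0 ?subr_le0.
Qed.

Lemma soft_soft d e y : d < `|y| -> soft e (soft d y) = soft (d + e) y.
Proof.
move=> lt_dy; have [->|y_neq0] := eqVneq y 0; first by rewrite /soft !(sgr0, mul0r).
have dy_gt0 : 0 < `|y| - d by rewrite subr_gt0.
rewrite {2}/soft max_l ?ltW // /soft sgrM sgr_id (gtr0_sg dy_gt0) mulr1.
by rewrite normrM normr_sg y_neq0 mul1r (gtr0_norm dy_gt0) opprD addrA.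
Qed.

Lemma near_soft_out d x : 0 <= d -> d < `|x| ->
  \forall y \near x, soft d y = y - Num.sg x * d.
Proof.
move=> d_ge0 lt_dx.
have [x_gt0|x_lt0|x0] := ltrgt0P x; last by move: lt_dx; rewrite x0 normr0 ltNge d_ge0.
- rewrite gtr0_norm // in lt_dx.
  near=> y; have lt_dy : d < y by near: y; exact: lt_nbhsr.
  have y_gt0 := le_lt_trans d_ge0 lt_dy.
  by rewrite soft_out ?gtr0_norm // !gtr0_sg.
- rewrite ltr0_norm // ltrNr in lt_dx.
  near=> y; have lt_yd : y < - d by near: y; exact: lt_nbhsl.
  have y_lt0 : y < 0 by rewrite (lt_le_trans lt_yd) // oppr_le0.
  by rewrite soft_out ?(ltr0_sg y_lt0) ?ltr0_sg // ltr0_norm // ltrNr.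
Unshelve. all: by end_near.
Qed.

Lemma derive1_soft d x : 0 <= d -> d < `|x| -> derive1 (soft d) x = 1.
Proof.
move=> d_ge0 lt_dx.
rewrite derive1E (near_eq_derive _ (near_soft_out d_ge0 lt_dx)).
by rewrite deriveB //= derive_id derive_cst subr0.
Qed.

End SoftThreshold.

Theorem lemma1 (R : realType) (n : nat) (L : 'rV[R]_n -> R)
  (eta d : nat -> R) (theta : nat -> 'rV[R]_n) (Dw : nat -> 'rV[R]_n)
  (t : nat) (i : 'I_n) :
  (forall x, differentiable L x) ->
  (forall s, 0 < eta s) ->
  (forall s, 0 <= d s) ->
  (* Dw s = nabla_theta w(theta^(s), d^(s)), componentwise the derivative of
     S_{d^(s)} at theta_j^(s) whenever |theta_j^(s)| <> d^(s) *)
  (forall s (j : 'I_n), `|theta s 0 j| != d s ->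
     Dw s 0 j = derive1 (soft (d s)) (theta s 0 j)) ->
  (* update rule for the hidden weights *)
  (forall s (j : 'I_n),
     theta s.+1 0 j = theta s 0 j
       - eta s * partial L j (softv (d s) (theta s)) * Dw s 0 j) ->
  softv (d t) (theta t) 0 i != 0 ->
  d t < `|theta t.+1 0 i| ->
  Num.sg (theta t.+1 0 i) = Num.sg (theta t 0 i) ->
  softv (d t.+1) (theta t.+1) 0 i
  = soft (d t.+1 - d t)
      (softv (d t) (theta t) 0 i - eta t * partial L i (softv (d t) (theta t))).
Proof.
move=> _ _ d_ge0 Dw_derive theta_step.
rewrite /softv !mxE; set g := partial L i _.
move=> w_neq0 lt_d_theta' sg_theta'.
have lt_d_theta := soft_neq0_lt w_neq0.
have hidden_step : theta t.+1 0 i = theta t 0 i - eta t * g.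
  by rewrite theta_step Dw_derive ?gt_eqF // derive1_soft // mulr1.
have weight_step : soft (d t) (theta t 0 i) - eta t * g = soft (d t) (theta t.+1 0 i).
  by rewrite !soft_out // sg_theta' hidden_step addrAC.
by rewrite weight_step (soft_soft (d t.+1 - d t) lt_d_theta') subrKC.
Qed.
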